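(* Let $n\geq 1$, $m=\frac{n^2+n}{2}$, and let $z:\mathbb{R}^n\to\mathbb{R}^m$ be the map $z(x)=\begin{bmatrix}x_1^2 & x_1x_2 & \cdots & x_1x_n & x_2^2 & x_2x_3 & \cdots & x_n^2\end{bmatrix}^\top$ listing all quadratic monomials of $x$. Let $E=E^\top\in\mathbb{R}^{n\times n}$ be positive definite, $\alpha>0$, and $\mathcal{E}_\alpha=\{x : x^\top E x\leq\alpha^2\}$. Let $c_1,c_2,c_3\in\mathbb{R}^n$ be three nonzero, linearly independent vectors with $c_3$ orthogonal to both $c_1$ and $c_2$, and define $\phi(x)=x^\top Q x$ with $Q=\frac12(c_1c_2^\top+c_2c_1^\top)+c_3c_3^\top$. Then there exists $b\in\mathbb{R}^m$ such that $\phi(x)=b^\top z(x)$ for all $x$. Moreover, letting $W$ be either $(c_1^\top E^{-1}c_1)\,c_2c_2^\top$ or $(c_2^\top E^{-1}c_2)\,c_1c_1^\top$, and $\gamma=\lambda_{\max}\!\left(E^{-1/2}(2Q-c_3c_3^\top)E^{-1/2}\right)$, we have $$\begin{bmatrix} x\\ w\end{bmatrix}^\top\begin{bmatrix}\alpha^2 (W+\gamma c_3c_3^\top) & 0\\ 0 & -bb^\top\end{bmatrix}\begin{bmatrix} x\\ w\end{bmatrix}\geq 0\quad\text{for all } x\in\mathcal{E}_\alpha,\ w=z(x).$$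
   Context: $\lambda_{\max}(\cdot)$ denotes the largest eigenvalue of a real symmetric matrix, and $E^{-1/2}$ is the inverse of the symmetric positive definite square root of $E$. *)

From HB Require Import structures.
From mathcomp Require Import all_boot all_order all_algebra.
From mathcomp Require Import classical_sets reals.
Set Implicit Arguments. Unset Strict Implicit. Unset Printing Implicit Defensive.
Import Order.TTheory GRing.Theory Num.Theory.
Local Open Scope ring_scope.
Local Open Scope classical_set_scope.

Section Defs.
Variable R : realType.

Definition qf n (A : 'M[R]_n) (x : 'cV[R]_n) : R := (x^T *m A *m x) 0 0.

Definition symmetric n (A : 'M[R]_n) : Prop := A^T = A.
Definition posdef n (A : 'M[R]_n) : Prop :=
  symmetric A /\ forall x : 'cV[R]_n, x != 0 -> 0 < qf A x.

(* largest eigenvalue: supremum of the (finite, nonempty for symmetric A)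
   set of real eigenvalues of A *)
Definition lambda_max n (A : 'M[R]_n) : R := sup [set l : R | eigenvalue A l].

(* k-th coordinate of x (0-based), 0 if out of range *)
Definition coord_at n (x : 'cV[R]_n) (k : nat) : R :=
  odflt 0 (omap (fun i : 'I_n => x i 0) (insub k)).

Definition mdim (n : nat) : nat := ((n * n + n) %/ 2)%N.

Definition quad_pairs (n : nat) : seq (nat * nat) :=
  [seq (i, j) | i <- iota 0 n, j <- iota i (n - i)].

(* z(x) = [x1^2, x1x2, ..., x1xn, x2^2, x2x3, ..., xn^2]^T *)
Definition zmap n (x : 'cV[R]_n) : 'cV[R]_(mdim n) :=
  \col_(k < mdim n)
    (let p := nth (0%N, 0%N) (quad_pairs n) k in coord_at x p.1 * coord_at x p.2).

End Defs.

From HB Require Import structures.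
From mathcomp Require Import all_boot all_order all_algebra.
From mathcomp Require Import all_classical all_reals all_analysis.
From mathcomp Require Import zify ring lra.
Set Implicit Arguments. Unset Strict Implicit. Unset Printing Implicit Defensive.
Import Order.TTheory GRing.Theory Num.Theory.
Import numFieldNormedType.Exports.
Local Open Scope ring_scope.

(* Put a = c1'x, b = c2'x, v = c3'x and e = x'Ex.  Then phi(x) = ab + v^2 is a
   linear form in the monomials z(x), and x'(2Q - c3c3')x = 2ab + v^2.  With
   S = E^(1/2), the Cauchy-Schwarz inequality for S^-1 c1 and S x gives
   a^2 <= (c1'E^-1c1) e, and the Rayleigh bound for S^-1 (2Q - c3c3') S^-1
   gives 2ab + v^2 <= gamma e.  Multiplying these by b^2 and v^2, adding, and
   using e <= alpha^2 (note gamma >= 0, as 2Q - c3c3' is positive at c3, which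
   is orthogonal to c1) yields (ab + v^2)^2 <= alpha^2 ((c1'E^-1c1) b^2 + gamma v^2),
   which is the claim for the first choice of W; the second is symmetric.  The
   Rayleigh bound rests on the fact that a maximiser of x'Ax on the unit sphere
   is an eigenvector of the symmetric matrix A. *)

Lemma trmx11 (R : pzSemiRingType) (M : 'M[R]_1) : M^T = M.
Proof. by rewrite [M]mx11_scalar tr_scalar_mx. Qed.

Lemma le0_linear_quadratic (R : realFieldType) (P C : R) :
  (forall t, 0 < t -> t * (2 * P + t * C) <= 0) -> P <= 0.
Proof.
move=> H; rewrite leNgt; apply/negP => P_gt0.
have t_gt0 : 0 < P / (1 + `|C|) by rewrite divr_gt0 // ltr_pwDl.
have := H _ t_gt0; rewrite leNgt => /negP; apply; rewrite pmulr_rgt0 //.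
set t := P / (1 + `|C|) in t_gt0 *.
have tC : t * `|C| <= P.
  by rewrite /t mulrAC ler_pdivrMr ?ltr_pwDl // ler_pM2l // lerDr.
have : - (t * `|C|) <= t * C.
  by rewrite -mulrN (ler_wpM2l (ltW t_gt0)) // lerNnormlW.
lra.
Qed.

Section QuadraticForms.
Variables (R : realType) (n : nat).
Implicit Types (A B : 'M[R]_n) (x y u v : 'cV[R]_n).

Lemma dotmxC u v : (u^T *m v) 0 0 = (v^T *m u) 0 0.
Proof. by rewrite -[u^T *m v]trmx11 trmx_mul trmxK. Qed.

Lemma qfE A x : qf A x = \sum_i \sum_j x i 0 * A i j * x j 0.
Proof.
rewrite /qf mxE; under eq_bigr do rewrite mxE big_distrl.
rewrite exchange_big; apply: eq_bigr => i _; apply: eq_bigr => j _.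
by rewrite !mxE.
Qed.

Lemma qf1E x : qf 1%:M x = (x^T *m x) 0 0.
Proof. by rewrite /qf mulmx1. Qed.

Lemma qf1_sum x : qf 1%:M x = \sum_i x i 0 ^+ 2.
Proof.
rewrite qfE; apply: eq_bigr => i _.
rewrite (bigD1 i) //= mxE eqxx mulr1 expr2 big1 ?addr0 // => j /negbTE ji.
by rewrite mxE eq_sym ji mulr0 mul0r.
Qed.

Lemma qf1_ge0 x : 0 <= qf 1%:M x.
Proof. by rewrite qf1_sum sumr_ge0 // => i _; rewrite sqr_ge0. Qed.

Lemma qf1_eq0 x : (qf 1%:M x == 0) = (x == 0).
Proof.
apply/idP/eqP => [|->]; last by rewrite /qf mulmx0 mxE.
rewrite qf1_sum psumr_eq0 => [/allP x0|i _]; last exact: sqr_ge0.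
apply/colP => i; rewrite mxE.
by have := x0 i (mem_index_enum _); rewrite sqrf_eq0 => /eqP.
Qed.

Lemma qf1_gt0 x : x != 0 -> 0 < qf 1%:M x.
Proof. by rewrite lt_def qf1_eq0 qf1_ge0 andbT. Qed.

Lemma qfDl A B x : qf (A + B) x = qf A x + qf B x.
Proof. by rewrite /qf mulmxDr mulmxDl mxE. Qed.

Lemma qfZl k A x : qf (k *: A) x = k * qf A x.
Proof. by rewrite /qf -scalemxAr -scalemxAl mxE. Qed.

Lemma qfNl A x : qf (- A) x = - qf A x.
Proof. by rewrite -scaleN1r qfZl mulN1r. Qed.

Lemma qfZr k A x : qf A (k *: x) = k ^+ 2 * qf A x.
Proof. by rewrite /qf [(k *: x)^T]linearZ -scalemxAr -!scalemxAl !mxE mulrA expr2. Qed.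

Lemma qfDr A x y : A^T = A ->
  qf A (x + y) = qf A x + 2 * (x^T *m A *m y) 0 0 + qf A y.
Proof.
move=> symA; rewrite /qf [(x + y)^T]linearD !mulmxDl !mulmxDr.
have -> : y^T *m A *m x = x^T *m A *m y.
  by rewrite -[LHS]trmx11 !trmx_mul trmxK symA mulmxA.
set X := x^T *m A *m x; set Y := y^T *m A *m y; set Z := x^T *m A *m y.
by rewrite !mxE mulr2n mulrDl mul1r !addrA.
Qed.

Lemma qf_line A x y t : A^T = A ->
  qf A (x + t *: y) = qf A x + 2 * t * (x^T *m A *m y) 0 0 + t ^+ 2 * qf A y.
Proof.
by move=> symA; rewrite qfDr // qfZr -scalemxAr [in 2 * _]mxE mulrA.
Qed.

Lemma trmx_symD A B : A^T = A -> B^T = B -> (A + B)^T = A + B.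
Proof. by move=> symA symB; rewrite [(A + B)^T]linearD /= symA symB. Qed.

Lemma trmx_symZ k A : A^T = A -> (k *: A)^T = k *: A.
Proof. by move=> symA; rewrite [(k *: A)^T]linearZ /= symA. Qed.

Lemma trmx_symN A : A^T = A -> (- A)^T = - A.
Proof. by move=> symA; rewrite -scaleN1r trmx_symZ. Qed.

Lemma trmx_outer_sym u : (u *m u^T)^T = u *m u^T.
Proof. by rewrite trmx_mul trmxK. Qed.

Lemma trmx_outerD_sym u v : (u *m v^T + v *m u^T)^T = u *m v^T + v *m u^T.
Proof. by rewrite [(_ + _)^T]linearD /= !trmx_mul !trmxK addrC. Qed.

Lemma qf_outer u v x : qf (u *m v^T) x = (u^T *m x) 0 0 * (v^T *m x) 0 0.
Proof.
rewrite /qf !mulmxA -(mulmxA (x^T *m u)) [LHS]mxE big_ord1.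
by rewrite dotmxC.
Qed.

Lemma qf_mulmx A B x : qf A (B *m x) = qf (B^T *m A *m B) x.
Proof. by rewrite /qf trmx_mul !mulmxA. Qed.

Lemma qf_block_diag m A (D : 'M[R]_m) x (w : 'cV[R]_m) :
  qf (block_mx A 0 0 D) (col_mx x w) = qf A x + qf D w.
Proof.
rewrite /qf tr_col_mx mul_row_block !mulmx0 addr0 add0r mul_row_col.
by rewrite mxE.
Qed.

Lemma cauchy_schwarz u x : (u^T *m x) 0 0 ^+ 2 <= qf 1%:M u * qf 1%:M x.
Proof.
have [->|u0] := eqVneq u 0; first by rewrite /qf trmx0 !mul0mx !mxE expr0n mul0r.
set a := qf 1%:M u; set b := (u^T *m x) 0 0.
have := qf1_ge0 (a *: x + (- b) *: u).
rewrite qfDr ?trmx1 // !qfZr [(a *: x)^T]linearZ mulmx1 -scalemxAl -scalemxAr.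
rewrite (_ : x^T *m u = u^T *m x); last by rewrite -[LHS]trmx11 trmx_mul trmxK.
rewrite [in 2 * _]mxE [in 2 * (a * _)]mxE -/b -/a => h.
rewrite -subr_ge0 -(pmulr_rge0 _ (qf1_gt0 u0)) -/a.
suff -> : a * (a * qf 1%:M x - b ^+ 2)
  = a ^+ 2 * qf 1%:M x + 2 * (a * (- b * b)) + (- b) ^+ 2 * a by [].
ring.
Qed.

End QuadraticForms.

Section Rayleigh.
Variables (R : realType) (n : nat).
Implicit Types (A : 'M[R]_n) (x c : 'cV[R]_n).
Local Open Scope classical_set_scope.

Lemma qf_trmx_continuous A : continuous (fun y : 'rV[R]_n => qf A y^T).
Proof.
have -> : (fun y : 'rV[R]_n => qf A y^T) =
    (fun y => \sum_i \sum_j y 0 i * A i j * y 0 j).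
  by apply: funext => y; rewrite qfE; apply: eq_bigr => i _;
    apply: eq_bigr => j _; rewrite !mxE.
apply: continuous_big; first exact: add_continuous.
move=> i _; apply: continuous_big; first exact: add_continuous.
move=> j _ y.
apply: (@continuousM R _ (fun y : 'rV[R]_n => y 0 i * A i j) (fun y => y 0 j) y);
  last exact: coord_continuous.
apply: (@continuousM R _ (fun y : 'rV[R]_n => y 0 i) (fun=> A i j) y);
  [exact: coord_continuous | exact: cst_continuous].
Qed.

Lemma qf1_normalize x : x != 0 ->
  qf 1%:M ((Num.sqrt (qf 1%:M x))^-1 *: x) = 1.
Proof.
move=> x0; rewrite qfZr exprVn sqr_sqrtr ?qf1_ge0 // mulVf //.
by rewrite gt_eqF // qf1_gt0.
Qed.

Lemma exists_rayleigh_max A : (0 < n)%N ->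
  exists c, qf 1%:M c = 1 /\ forall x, qf A x <= qf A c * qf 1%:M x.
Proof.
(* Compactness is available for row vectors, so the unit sphere is taken in 'rV_n. *)
move=> n_gt0; pose K := [set y : 'rV[R]_n | qf 1%:M y^T = 1].
have K0 : K !=set0.
  have x0 : (const_mx 1 : 'cV[R]_n) != 0.
    apply/negP => /eqP /colP /(_ (Ordinal n_gt0)); rewrite !mxE => /eqP.
    by rewrite oner_eq0.
  by exists ((Num.sqrt (qf 1%:M (const_mx 1 : 'cV[R]_n)))^-1 *: const_mx 1)^T;
    rewrite /K /= trmxK qf1_normalize.
have Kc : compact K.
  apply: bounded_closed_compact.
    exists 1; split => // M M_gt1 y Ky /=; rewrite [X in X <= _]mx_normrE.
    apply: le_trans (ltW M_gt1); apply: bigmax_le => // -[i j] _ /=.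
    rewrite (ord1 i); have : y 0 j ^+ 2 <= 1.
      rewrite -[1]Ky qf1_sum (bigD1 j) //= mxE lerDl sumr_ge0 // => k _.
      exact: sqr_ge0.
    by rewrite -real_normK ?num_real // expr_le1.
  have -> : K = (fun y => qf 1%:M y^T) @^-1` [set 1] by [].
  apply: closed_comp; last exact: closed_eq.
  by move=> y _; exact: qf_trmx_continuous.
have [y /set_mem Ky ymax] :=
  compact_EVT_max K0 Kc (continuous_subspaceT (@qf_trmx_continuous A)).
exists y^T; split => // x; have [->|x0] := eqVneq x 0.
  by rewrite /qf !mulmx0 !mxE mulr0.
have := ymax ((Num.sqrt (qf 1%:M x))^-1 *: x)^T.
rewrite inE /K /= trmxK => /(_ (qf1_normalize x0)).
rewrite qfZr exprVn sqr_sqrtr ?qf1_ge0 // mulrC.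
by rewrite ler_pdivrMr ?qf1_gt0.
Qed.

Lemma rayleigh_max_eigenvector A c : A^T = A -> qf 1%:M c = 1 ->
  (forall x, qf A x <= qf A c * qf 1%:M x) -> A *m c = qf A c *: c.
Proof.
move=> symA c1 cmax; set mu := qf A c; set h := A *m c - mu *: c.
have cross : (c^T *m A *m h) 0 0 - mu * (c^T *m 1%:M *m h) 0 0 = qf 1%:M h.
  have hT : h^T = c^T *m A - mu *: c^T.
    by rewrite /h linearB /= linearZ /= trmx_mul symA.
  by rewrite qf1E mulmx1 hT mulmxBl -scalemxAl !mxE.
have expand t : qf A (c + t *: h) - mu * qf 1%:M (c + t *: h)
    = t * (2 * qf 1%:M h + t * (qf A h - mu * qf 1%:M h)).
  by rewrite !qf_line ?trmx1 // -cross c1 /mu; ring.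
have h_le0 : qf 1%:M h <= 0.
  apply: (le0_linear_quadratic (C := qf A h - mu * qf 1%:M h)) => s _.
  by rewrite -expand subr_le0.
by apply/eqP; rewrite -subr_eq0 -/h -qf1_eq0 eq_le h_le0 qf1_ge0.
Qed.

Lemma exists_eigenvalue_rayleigh A : A^T = A -> (0 < n)%N ->
  exists2 mu, eigenvalue A mu & forall x, qf A x <= mu * qf 1%:M x.
Proof.
move=> symA /(exists_rayleigh_max A) [c [c1 cmax]].
exists (qf A c) => //; apply/eigenvalueP; exists c^T.
  by rewrite -[c^T *m A]trmxK trmx_mul trmxK symA rayleigh_max_eigenvector //
    [(_ *: _)^T]linearZ.
by rewrite trmx_eq0 -qf1_eq0 c1 oner_eq0.
Qed.

Lemma eigenvalue_le_rayleigh A mu l :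
  (forall x, qf A x <= mu * qf 1%:M x) -> eigenvalue A l -> l <= mu.
Proof.
move=> bound /eigenvalueP [v vA v0].
have := bound v^T; rewrite {1}/qf trmxK vA -scalemxAl [in X in X <= _]mxE.
by rewrite -[v in (v *m _) 0 0]trmxK -qf1E ler_pM2r // qf1_gt0 ?trmx_eq0.
Qed.

Lemma qf_le_lambda_max A x : A^T = A -> (0 < n)%N ->
  qf A x <= lambda_max A * qf 1%:M x.
Proof.
move=> symA n_gt0; have [mu Amu bound] := exists_eigenvalue_rayleigh symA n_gt0.
have : mu <= lambda_max A.
  apply: sup_upper_bound => //; split; first by exists mu.
  by exists mu => l; exact: eigenvalue_le_rayleigh.
by move/(ler_wpM2r (qf1_ge0 x))/(le_trans (bound x)).
Qed.

End Rayleigh.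

Section SquareRoot.
Variables (R : realType) (n : nat) (S : 'M[R]_n).
Hypotheses (symS : S^T = S) (S_unit : S \in unitmx).

Lemma trmx_invmx_sym : (invmx S)^T = invmx S.
Proof. by rewrite trmx_inv symS. Qed.

Lemma invmx_sqr : invmx (S *m S) = invmx S *m invmx S.
Proof.
have SS_unit : S *m S \in unitmx by rewrite unitmx_mul S_unit.
rewrite -[RHS](mulKmx SS_unit) -[S *m S *m _]mulmxA.
by rewrite [S *m (invmx S *m _)]mulmxA mulmxV // mul1mx mulmxV // mulmx1.
Qed.

Lemma qf_sqr x : qf (S *m S) x = qf 1%:M (S *m x).
Proof. by rewrite qf_mulmx mulmx1 symS. Qed.

Lemma qf_invmx_sqr c : qf (invmx (S *m S)) c = qf 1%:M (invmx S *m c).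
Proof. by rewrite invmx_sqr qf_mulmx mulmx1 trmx_invmx_sym. Qed.

Lemma qf_conj_invmx P x : qf (invmx S *m P *m invmx S) (S *m x) = qf P x.
Proof.
rewrite qf_mulmx symS !mulmxA mulmxV // mul1mx -mulmxA mulVmx //.
by rewrite mulmx1.
Qed.

Lemma cauchy_schwarz_sqr c x :
  (c^T *m x) 0 0 ^+ 2 <= qf (invmx (S *m S)) c * qf (S *m S) x.
Proof.
rewrite qf_invmx_sqr qf_sqr; have := cauchy_schwarz (invmx S *m c) (S *m x).
by rewrite trmx_mul trmx_invmx_sym mulmxA -(mulmxA c^T) mulVmx // mulmx1.
Qed.

Lemma qf_le_lambda_max_sqr P x : P^T = P -> (0 < n)%N ->
  qf P x <= lambda_max (invmx S *m P *m invmx S) * qf (S *m S) x.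
Proof.
move=> symP n_gt0; rewrite qf_sqr -[in leLHS](qf_conj_invmx P).
apply: qf_le_lambda_max => //.
by rewrite !trmx_mul trmx_invmx_sym symP mulmxA.
Qed.

End SquareRoot.

Lemma posdef_unitmx (R : realType) n (S : 'M[R]_n) : posdef S -> S \in unitmx.
Proof.
case=> _ S_pos; rewrite unitmxE unitfE; apply/negP => /det0P [v v0 vS].
have := S_pos v^T; rewrite trmx_eq0 => /(_ v0).
by rewrite /qf trmxK vS mul0mx mxE ltxx.
Qed.

Lemma sqr_mul_add_sqr_le (R : realFieldType) (a b v e k g r : R) :
  e <= r -> 0 <= k -> 0 <= g -> a ^+ 2 <= k * e ->
  2 * (a * b) + v ^+ 2 <= g * e ->
  (a * b + v ^+ 2) ^+ 2 <= r * (k * b ^+ 2 + g * v ^+ 2).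
Proof.
move=> le_er k_ge0 g_ge0 le_a le_abv.
have b_term : a ^+ 2 * b ^+ 2 <= r * (k * b ^+ 2).
  have : k * e <= k * r by rewrite ler_wpM2l.
  by move: (sqr_ge0 b); nra.
have v_term : (2 * (a * b) + v ^+ 2) * v ^+ 2 <= r * (g * v ^+ 2).
  have : g * e <= g * r by rewrite ler_wpM2l.
  by move: (sqr_ge0 v); nra.
nra.
Qed.

Lemma sum_upper_triangle (V : nmodType) N (h : nat -> nat -> V) :
  \sum_(0 <= i < N) \sum_(i <= j < N) (if i == j then h i i else h i j + h j i)
  = \sum_(0 <= i < N) \sum_(0 <= j < N) h i j.
Proof.
elim: N => [|N IH]; first by rewrite !big_geq.
rewrite big_nat_recr //= big_nat1 eqxx.
rewrite (@eq_big_nat _ _ _ 0 N _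
  (fun i => \sum_(i <= j < N) (if i == j then h i i else h i j + h j i)
            + (h i N + h N i))); last first.
  by move=> i /andP [_ iN]; rewrite big_nat_recr ?(ltnW iN) //= (ltn_eqF iN).
rewrite big_split /= IH big_split /= big_nat_recr //=.
rewrite (@eq_big_nat _ _ _ 0 N (fun i => \sum_(0 <= j < N.+1) h i j)
  (fun i => \sum_(0 <= j < N) h i j + h i N)); last by move=> i _; rewrite big_nat_recr.
rewrite big_split /= [\sum_(0 <= j < N.+1) h N j]big_nat_recr //=.
by rewrite !addrA.
Qed.

Lemma size_quad_pairs n : size (quad_pairs n) = mdim n.
Proof.
rewrite size_allpairs_dep sumnE big_map.
under eq_bigr do rewrite size_iota.
have -> : (\sum_(i <- iota 0 n) (n - i) = \sum_(0 <= i < n.+1) i)%N.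
  rewrite big_nat_recl // add0n -{1}(subn0 n) -/(index_iota 0 n) big_nat_rev.
  by apply: eq_big_nat => i /andP [_ i_lt]; lia.
by rewrite bin2_sum bin2 -divn2 /mdim /= mulSn addnC.
Qed.

Section QuadraticMonomials.
Variables (R : realType) (n : nat).

Definition entry_at (A : 'M[R]_n) (i j : nat) : R :=
  if insub i is Some i' then coord_at (row i' A)^T j else 0.

Definition quad_coef (A : 'M[R]_n) : 'cV[R]_(mdim n) :=
  \col_(k < mdim n)
    (let p := nth (0%N, 0%N) (quad_pairs n) k in
     if p.1 == p.2 then entry_at A p.1 p.1
     else entry_at A p.1 p.2 + entry_at A p.2 p.1).

Lemma coord_atE (x : 'cV[R]_n) (i : 'I_n) : coord_at x i = x i 0.
Proof. by rewrite /coord_at valK. Qed.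

Lemma entry_atE (A : 'M[R]_n) (i j : 'I_n) : entry_at A i j = A i j.
Proof. by rewrite /entry_at valK coord_atE !mxE. Qed.

Lemma quad_coefP (A : 'M[R]_n) x : qf A x = ((quad_coef A)^T *m zmap x) 0 0.
Proof.
pose h i j := coord_at x i * entry_at A i j * coord_at x j.
have -> : qf A x = \sum_(0 <= i < n) \sum_(0 <= j < n) h i j.
  rewrite qfE big_mkord; apply: eq_bigr => i _; rewrite big_mkord.
  by apply: eq_bigr => j _; rewrite /h !coord_atE entry_atE.
pose g (p : nat * nat) :=
  (if p.1 == p.2 then entry_at A p.1 p.1
   else entry_at A p.1 p.2 + entry_at A p.2 p.1)
  * (coord_at x p.1 * coord_at x p.2).
have -> : ((quad_coef A)^T *m zmap x) 0 0 = \sum_(p <- quad_pairs n) g p.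
  rewrite (big_nth (0%N, 0%N)) size_quad_pairs big_mkord mxE.
  by apply: eq_bigr => k _; rewrite !mxE.
have iota0 : iota 0 n = index_iota 0 n by rewrite /index_iota subn0.
rewrite big_allpairs_dep iota0 -sum_upper_triangle.
apply: eq_big_nat => i _; apply: eq_big_nat => j _.
by rewrite /g /h /=; case: eqP => [<-|_]; ring.
Qed.

End QuadraticMonomials.

Section PaperForm.
Variables (R : realType) (n : nat) (c1 c2 c3 : 'cV[R]_n).
Local Notation Q := (2^-1 *: (c1 *m c2^T + c2 *m c1^T) + c3 *m c3^T).

Lemma qf_Q x :
  qf Q x = (c1^T *m x) 0 0 * (c2^T *m x) 0 0 + (c3^T *m x) 0 0 ^+ 2.
Proof. by rewrite qfDl qfZl qfDl !qf_outer; field. Qed.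

Lemma qf_2Q_sub x : qf (2%:R *: Q - c3 *m c3^T) x
  = 2 * ((c1^T *m x) 0 0 * (c2^T *m x) 0 0) + (c3^T *m x) 0 0 ^+ 2.
Proof. by rewrite qfDl qfNl qfZl qf_Q qf_outer; ring. Qed.

Lemma trmx_2Q_sub : (2%:R *: Q - c3 *m c3^T)^T = 2%:R *: Q - c3 *m c3^T.
Proof.
apply/trmx_symD/trmx_symN/trmx_outer_sym/trmx_symZ/trmx_symD.
  exact/trmx_symZ/trmx_outerD_sym.
exact: trmx_outer_sym.
Qed.

End PaperForm.

Theorem theorem3 (R : realType) (n : nat) (hn : (1 <= n)%N)
  (E : 'M[R]_n) (hE : posdef E) (alpha : R) (halpha : 0 < alpha)
  (c1 c2 c3 : 'cV[R]_n)
  (hc1 : c1 != 0) (hc2 : c2 != 0) (hc3 : c3 != 0)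
  (hfree : free [:: c1; c2; c3])
  (h31 : (c3^T *m c1) 0 0 = 0) (h32 : (c3^T *m c2) 0 0 = 0) :
  let Q := 2^-1 *: (c1 *m c2^T + c2 *m c1^T) + c3 *m c3^T in
  let phi := fun x : 'cV[R]_n => qf Q x in
  exists b : 'cV[R]_(mdim n),
    (forall x : 'cV[R]_n, phi x = (b^T *m zmap x) 0 0) /\
    (forall S : 'M[R]_n, posdef S -> S *m S = E ->
     (* S = E^{1/2}, so invmx S = E^{-1/2} *)
     let gamma := lambda_max (invmx S *m (2%:R *: Q - c3 *m c3^T) *m invmx S) in
     forall W : 'M[R]_n,
       W = qf (invmx E) c1 *: (c2 *m c2^T) \/
       W = qf (invmx E) c2 *: (c1 *m c1^T) ->
     forall x : 'cV[R]_n, qf E x <= alpha ^+ 2 ->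
       let w := zmap x in
       0 <= qf (block_mx (alpha ^+ 2 *: (W + gamma *: (c3 *m c3^T))) 0
                         0 (- (b *m b^T)))
               (col_mx x w)).
Proof.
move=> Q phi; exists (quad_coef Q); split=> [x|S S_pd SSE gamma W hW x hx /=].
  exact: quad_coefP.
have [symS _] := S_pd; have S_unit := posdef_unitmx S_pd; subst E.
have gammaP z : qf (2%:R *: Q - c3 *m c3^T) z <= gamma * qf (S *m S) z.
  by apply: qf_le_lambda_max_sqr => //; exact: trmx_2Q_sub.
have gamma_ge0 : 0 <= gamma.
  have := gammaP c3; rewrite qf_2Q_sub dotmxC h31 mul0r mulr0 add0r.
  have := qf1_gt0 hc3; rewrite qf1E (qf_sqr symS).
  have := qf1_ge0 (S *m c3).
  nra.
have K_ge0 c : 0 <= qf (invmx (S *m S)) c by rewrite qf_invmx_sqr ?qf1_ge0.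
have CS c : (c^T *m x) 0 0 ^+ 2 <= qf (invmx (S *m S)) c * qf (S *m S) x.
  exact: cauchy_schwarz_sqr.
have abv := gammaP x; rewrite qf_2Q_sub in abv.
rewrite qf_block_diag qfNl qf_outer -quad_coefP qf_Q qfZl qfDl qfZl qf_outer.
rewrite -!expr2 subr_ge0; case: hW => ->; rewrite qfZl qf_outer -expr2.
  exact: sqr_mul_add_sqr_le hx (K_ge0 c1) gamma_ge0 (CS c1) abv.
rewrite [(c1^T *m x) 0 0 * _]mulrC in abv *.
exact: sqr_mul_add_sqr_le hx (K_ge0 c2) gamma_ge0 (CS c2) abv.
Qed.
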